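(* For the pointed endofunctor $(T,t)$ on $\mathsf{cSet}$ defined below, there is a monad $(T_\infty,t_\infty,\mu)$ on $\mathsf{cSet}$ and a natural transformation $\eta:T\to T_\infty$ with $\eta\circ t=t_\infty$ such that the induced comparison functor from the category of $T_\infty$-algebras to the category of $(T,t)$-algebras, sending $(X,\psi)$ to $(X,\psi\circ\eta_X)$, is an isomorphism of categories.
   Context: Let $\mathbb{B}$ be the category of finite sets $[n]=\{\bot,x_1,\dots,x_n,\top\}$ ($n\ge0$, $\bot\ne\top$) and functions preserving $\bot,\top$; $\mathsf{cSet}$ is the category of presheaves on $\mathbb{B}^{op}$. $\mathrm{I}^n$ is the representable on $[n]$, $\mathrm{I}^n\cong\mathrm{I}\times\dots\times\mathrm{I}$, $\mathrm{I}=\mathrm{I}^1$; the two maps $[1]\to[0]$ give endpoints $0,1:1\to\mathrm{I}$. For $1\le i\le n$, $d\in\{0,1\}$, the face $\alpha_i^d:\mathrm{I}^{n-1}\to\mathrm{I}^n$ inserts $d$ in coordinate $i$; for $e\in\{0,1\}$ the open box $\sqcup^n_e\rightarrowtail\mathrm{I}^n$ is the union of the images of all faces $\alpha_i^d$ with $(i,d)\ne(1,e)$, with inclusion $i^n_e$. $T(X)$ is the pushout of \[ \textstyle\coprod_{n,e} X^{\sqcup^n_e}\times\mathrm{I}^n \xleftarrow{\ \coprod 1\times i^n_e\ } \coprod_{n,e}X^{\sqcup^n_e}\times\sqcup^n_e \xrightarrow{\ [\mathrm{eval}]\ } X, \] coproducts over $n\ge1$, $e\in\{0,1\}$, and $t_X:X\to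 T(X)$ is the pushout injection. A $(T,t)$-algebra is $(X,\phi)$ with $\phi:TX\to X$, $\phi t_X=1_X$; morphisms $h$ satisfy $h\phi=\psi T(h)$. $T_\infty$-algebras are the (Eilenberg–Moore) algebras of the monad. *)

From Stdlib Require Import Relations.Relation_Operators.
From Stdlib Require Import FunctionalExtensionality ProofIrrelevance PropExtensionality.
From HB Require Import structures.
From mathcomp Require Import all_boot.

Set Implicit Arguments.
Unset Strict Implicit.
Unset Printing Implicit Defensive.

(* [n] = {bot, x_1, ..., x_n, top} is encoded as 'I_n.+2 with          *)
(*   0 = bot, i = x_i (1 <= i <= n), n.+1 = top.                       *)
(* A map [n] -> [m] preserving bot and top is determined by the images *)
(* of x_1..x_n; we store it as f : {ffun 'I_n -> 'I_m.+2}, where f i   *)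
(* is the image of x_(i+1).  bext f : 'I_n.+2 -> 'I_m.+2 is the whole  *)
(* bot/top-preserving function.                                        *)

Definition bhom (n m : nat) : Type := {ffun 'I_n -> 'I_m.+2}.

Definition bext m k (g : bhom m k) (v : 'I_m.+2) : 'I_k.+2 :=
  if val v == 0 then ord0 else
  match insub (val v).-1 with Some j => g j | None => ord_max end.

Definition bcomp n m k (g : bhom m k) (f : bhom n m) : bhom n k :=
  [ffun i => bext g (f i)].

Definition bid n : bhom n n := [ffun i : 'I_n => inord i.+1].

Lemma bext_bot m k (g : bhom m k) : bext g ord0 = ord0.
Proof. by rewrite /bext /=. Qed.

Lemma bext_top m k (g : bhom m k) : bext g ord_max = ord_max.
Proof.
rewrite /bext /=; case: insubP => // j; rewrite /= ltnn //.
Qed.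

Lemma bext_id m (v : 'I_m.+2) : bext (bid m) v = v.
Proof.
rewrite /bext; case: v => [[|v] Hv] //=.
  by apply: val_inj.
case: insubP => [j Hj Ej|Hj] /=.
  by rewrite ffunE; apply: val_inj; rewrite /= inordK Ej.
apply: val_inj => /=; move: Hv Hj; rewrite !ltnS -leqNgt => H1 H2.
by apply/eqP; rewrite eqSS eqn_leq H1 H2.
Qed.

Lemma bext_comp n m k (g : bhom m k) (f : bhom n m) (v : 'I_n.+2) :
  bext (bcomp g f) v = bext g (bext f v).
Proof.
have -> : bext f v = if val v == 0 then ord0 else
  match insub (val v).-1 with Some j => f j | None => ord_max end by [].
rewrite /bext; case: eqP => [_|_] /=; first by [].
case: insubP => [j _ _|_]; first by rewrite ffunE.
exact: (esym (bext_top g)).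
Qed.

Lemma bcomp_idl n m (f : bhom n m) : bcomp (bid m) f = f.
Proof. by apply/ffunP => i; rewrite ffunE bext_id. Qed.

Lemma bcomp_idr n m (g : bhom n m) : bcomp g (bid n) = g.
Proof.
apply/ffunP => i; rewrite !ffunE /bext /= inordK; last by rewrite !ltnS ltnW.
case: insubP => [j _ Ej|]; last by rewrite /= ltn_ord.
by congr (g _); apply: val_inj.
Qed.

Lemma bcomp_assoc n m k l (h : bhom k l) (g : bhom m k) (f : bhom n m) :
  bcomp h (bcomp g f) = bcomp (bcomp h g) f.
Proof. by apply/ffunP => i; rewrite !ffunE bext_comp. Qed.

(* cSet = presheaves on B^op = covariant functors B -> Type.           *)

Unset Implicit Arguments.
Record cset := CSet {
  cob :> nat -> Type;
  cmap : forall n m, bhom n m -> cob n -> cob m;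
  cmap_id : forall n (x : cob n), cmap n n (bid n) x = x;
  cmap_comp : forall n m k (g : bhom m k) (f : bhom n m) (x : cob n),
      cmap n k (bcomp g f) x = cmap m k g (cmap n m f x) }.

Arguments cmap c {n m} _ _.

Record nt (X Y : cset) := NT {
  ntf :> forall n, X n -> Y n;
  ntnat : forall n m (f : bhom n m) (x : X n),
      ntf m (cmap X f x) = cmap Y f (ntf n x) }.

Arguments ntf {X Y} _ _ _.
Arguments NT {X Y} _ _.
Set Implicit Arguments.

Definition nt_eq (X Y : cset) (a b : nt X Y) : Prop :=
  forall n (x : X n), a n x = b n x.

Lemma nt_ext (X Y : cset) (a b : nt X Y) : nt_eq a b -> a = b.
Proof.
case: a => a Ha; case: b => b Hb /= E.
have Eab : a = b.
  by apply: functional_extensionality_dep => n; apply: functional_extensionality => x; apply: E.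
subst b; congr NT; apply: proof_irrelevance.
Qed.

Definition ntid (X : cset) : nt X X := @NT X X (fun n x => x) (fun _ _ _ _ => erefl).

Definition ntcomp (X Y Z : cset) (g : nt Y Z) (f : nt X Y) : nt X Z.
Proof.
refine (@NT X Z (fun n x => g n (f n x)) _).
by move=> n m h x; rewrite ntnat ntnat.
Defined.

Definition yo (n : nat) : cset.
Proof.
refine (@CSet (fun m => bhom n m) (fun m m' f g => bcomp f g) _ _).
- by move=> m g; rewrite bcomp_idl.
- by move=> m m' k g f x; rewrite bcomp_assoc.
Defined.

Definition cprod (A B : cset) : cset.
Proof.
refine (@CSet (fun m => (A m * B m)%type)
  (fun m m' f p => (cmap A f p.1, cmap B f p.2)) _ _).
- by move=> m [a b]; rewrite /= !cmap_id.
- by move=> m m' k g f [a b]; rewrite /= !cmap_comp.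
Defined.

Definition prod_yo_map (A : cset) m m' (f : bhom m m') :
  nt (cprod A (yo m')) (cprod A (yo m)).
Proof.
refine (@NT (cprod A (yo m')) (cprod A (yo m)) (fun k p => (p.1, bcomp p.2 f)) _).
by move=> k k' h [a g]; rewrite /= bcomp_assoc.
Defined.

Definition cexp (A X : cset) : cset.
Proof.
refine (@CSet (fun m => nt (cprod A (yo m)) X)
  (fun m m' f phi => ntcomp phi (prod_yo_map A f)) _ _).
- by move=> m phi; apply: nt_ext => k [a g] /=; rewrite bcomp_idr.
- by move=> m m' k g f phi; apply: nt_ext => l [a h] /=; rewrite bcomp_assoc.
Defined.

Definition ceval (A X : cset) m (phi : cexp A X m) (a : A m) : X m :=
  phi m (a, bid m).

(* For n = k.+1, coordinates 1..n are indexed by i : 'I_k.+1 (i = 0 is *)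
(* coordinate 1).  The face alpha_i^d : I^k -> I^(k+1) is induced (by  *)
(* Yoneda) by the B-map face i d : [k+1] -> [k] sending x_(i+1) to the *)
(* endpoint d (bot for d = false, i.e. 0; top for d = true, i.e. 1) and *)
(* the other x_j's order-preservingly onto x_1..x_k.                   *)

Definition face k (i : 'I_k.+1) (d : bool) : bhom k.+1 k :=
  [ffun j : 'I_k.+1 => if j == i then (if d then ord_max else ord0)
                       else if (j < i)%N then inord j.+1 else inord j].

Definition alpha k (i : 'I_k.+1) (d : bool) m (y : bhom k m) : bhom k.+1 m :=
  bcomp y (face i d).

Definition in_box k (e : bool) m (g : bhom k.+1 m) : bool :=
  [exists i : 'I_k.+1, exists d : bool,
     ((i != ord0) || (d != e)) && [exists y : bhom k m, g == alpha i d y]].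

Lemma in_box_comp k e m m' (f : bhom m m') (g : bhom k.+1 m) :
  in_box e g -> in_box e (bcomp f g).
Proof.
case/existsP=> i /existsP [d /andP [Hid /existsP [y /eqP Hy]]].
apply/existsP; exists i; apply/existsP; exists d; rewrite Hid /=.
by apply/existsP; exists (bcomp f y); rewrite Hy /alpha bcomp_assoc.
Qed.

Definition box (k : nat) (e : bool) : cset.
Proof.
refine (@CSet (fun m => {g : bhom k.+1 m | in_box e g})
  (fun m m' f g => exist _ (bcomp f (val g)) (in_box_comp f (valP g))) _ _).
- by move=> m g; apply: val_inj; rewrite /= bcomp_idl.
- by move=> m m' l g f x; apply: val_inj; rewrite /= bcomp_assoc.
Defined.

Definition quot (A : Type) (R : A -> A -> Prop) : Type :=
  {P : A -> Prop | exists a, P = clos_refl_sym_trans A R a}.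

Definition qcls (A : Type) (R : A -> A -> Prop) (a : A) : quot R :=
  exist _ (clos_refl_sym_trans A R a) (ex_intro _ a erefl).

Lemma quot_eq (A : Type) (R : A -> A -> Prop) (q1 q2 : quot R) :
  sval q1 = sval q2 -> q1 = q2.
Proof.
case: q1 => P1 H1; case: q2 => P2 H2 /= E; subst P2.
by congr exist; apply: proof_irrelevance.
Qed.

Lemma qsurj (A : Type) (R : A -> A -> Prop) (q : quot R) :
  exists a, q = qcls R a.
Proof. by case: q => P [a Ha]; exists a; apply: quot_eq. Qed.

Lemma crst_map (A B : Type) (R : A -> A -> Prop) (S : B -> B -> Prop)
  (f : A -> B) (Hf : forall a a', R a a' -> clos_refl_sym_trans B S (f a) (f a'))
  a a' : clos_refl_sym_trans A R a a' ->
         clos_refl_sym_trans B S (f a) (f a').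
Proof.
elim=> [x y /Hf //|x|x y _ IH|x y z _ IH1 _ IH2].
- exact: rst_refl.
- exact: rst_sym.
- exact: rst_trans IH2.
Qed.

Lemma qmap_wf (A B : Type) (R : A -> A -> Prop) (S : B -> B -> Prop)
  (f : A -> B) (Hf : forall a a', R a a' -> clos_refl_sym_trans B S (f a) (f a'))
  (P : A -> Prop) : (exists a, P = clos_refl_sym_trans A R a) ->
  exists b0, (fun b => exists a, P a /\ clos_refl_sym_trans B S (f a) b)
             = clos_refl_sym_trans B S b0.
Proof.
case=> a0 ->; exists (f a0).
apply: functional_extensionality => b; apply: propositional_extensionality; split.
- case=> a [Ha Hb]; apply: rst_trans Hb; exact: crst_map Ha.
- by move=> Hb; exists a0; split => //; exact: rst_refl.
Qed.

Definition qmap (A B : Type) (R : A -> A -> Prop) (S : B -> B -> Prop)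
  (f : A -> B) (Hf : forall a a', R a a' -> clos_refl_sym_trans B S (f a) (f a'))
  (q : quot R) : quot S :=
  exist _ (fun b => exists a, sval q a /\ clos_refl_sym_trans B S (f a) b)
    (qmap_wf Hf (svalP q)).

Lemma qmap_cls (A B : Type) (R : A -> A -> Prop) (S : B -> B -> Prop)
  (f : A -> B) Hf (a : A) : @qmap A B R S f Hf (qcls R a) = qcls S (f a).
Proof.
apply: quot_eq => /=; apply: functional_extensionality => b.
apply: propositional_extensionality; split.
- case=> a' [Ha Hb]; apply: rst_trans Hb; exact: crst_map Ha.
- by move=> Hb; exists a; split => //; exact: rst_refl.
Qed.

(* T(X) is the pushout of                                              *)
(*   coprod_{n,e} X^(box n e) x I^n  <-  coprod_{n,e} X^(box n e) x box n e  -> X *)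
(* (n = k.+1 >= 1, e : bool), computed levelwise as a quotient of      *)
(* X(m) + coprod_{k,e} (X^(box k.+1 e))(m) x I^(k+1)(m).               *)

Definition Tpre (X : cset) (m : nat) : Type :=
  (X m + {k : nat & {e : bool & (cexp (box k e) X m * bhom k.+1 m)%type}})%type.

Inductive Trel (X : cset) (m : nat) : Tpre X m -> Tpre X m -> Prop :=
| Tglue k e (phi : cexp (box k e) X m) (b : box k e m) :
    Trel (inl (ceval phi b)) (inr (existT _ k (existT _ e (phi, val b)))).

Definition Tpre_map (X : cset) m m' (f : bhom m m') (p : Tpre X m) : Tpre X m' :=
  match p with
  | inl x => inl (cmap X f x)
  | inr (existT k (existT e (phi, g))) =>
      inr (existT _ k (existT _ e (cmap (cexp (box k e) X) f phi, bcomp f g)))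
  end.

Lemma ceval_nat (X : cset) k e m m' (f : bhom m m')
  (phi : cexp (box k e) X m) (b : box k e m) :
  ceval (cmap (cexp (box k e) X) f phi) (cmap (box k e) f b)
  = cmap X f (ceval phi b).
Proof.
rewrite /ceval -(@ntnat _ _ phi) /=.
by rewrite bcomp_idl bcomp_idr.
Qed.

Lemma Tpre_map_resp (X : cset) m m' (f : bhom m m') (p p' : Tpre X m) :
  Trel p p' ->
  clos_refl_sym_trans _ (@Trel X m') (Tpre_map f p) (Tpre_map f p').
Proof.
case=> k e phi b /=; rewrite -ceval_nat.
apply: rst_step; exact: (Tglue (cmap (cexp (box k e) X) f phi) (cmap (box k e) f b)).
Qed.

Definition Tob (X : cset) : cset.
Proof.
refine (@CSet (fun m => quot (@Trel X m))
  (fun m m' f q => qmap (@Tpre_map_resp X m m' f) q) _ _).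
- move=> m q; case: (qsurj q) => a ->; rewrite qmap_cls; congr qcls.
  case: a => [x|[k [e [phi g]]]]; rewrite /Tpre_map; first by rewrite cmap_id.
  by rewrite (cmap_id (cexp (box k e) X) _ phi) bcomp_idl.
- move=> m m' l g f q; case: (qsurj q) => a ->; rewrite !qmap_cls; congr qcls.
  case: a => [x|[k [e [phi h]]]]; rewrite /Tpre_map; first by rewrite cmap_comp.
  by rewrite (cmap_comp (cexp (box k e) X) _ _ _ g f phi) bcomp_assoc.
Defined.

Definition tunit (X : cset) : nt X (Tob X).
Proof.
refine (@NT X (Tob X) (fun m x => qcls (@Trel X m) (inl x)) _).
by move=> n m f x /=; rewrite qmap_cls.
Defined.

Definition Tpre_hmap (X Y : cset) (h : nt X Y) m (p : Tpre X m) : Tpre Y m :=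
  match p with
  | inl x => inl (h m x)
  | inr (existT k (existT e (phi, g))) =>
      inr (existT _ k (existT _ e ((ntcomp h phi : cexp (box k e) Y m), g)))
  end.

Lemma Tpre_hmap_resp (X Y : cset) (h : nt X Y) m (p p' : Tpre X m) :
  Trel p p' ->
  clos_refl_sym_trans _ (@Trel Y m) (Tpre_hmap h p) (Tpre_hmap h p').
Proof.
case=> k e phi b /=; apply: rst_step.
exact: (Tglue (ntcomp h phi : cexp (box k e) Y m) b).
Qed.

Definition Tmap (X Y : cset) (h : nt X Y) : nt (Tob X) (Tob Y).
Proof.
refine (@NT (Tob X) (Tob Y) (fun m q => qmap (@Tpre_hmap_resp X Y h m) q) _).
move=> n m f q; case: (qsurj q) => a ->; rewrite /= !qmap_cls; congr qcls.
case: a => [x|[k [e [phi g]]]] /=; first by rewrite ntnat.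
have -> : ntcomp h (cmap (cexp (box k e) X) f phi)
          = cmap (cexp (box k e) Y) f (ntcomp h phi) by apply: nt_ext.
by [].
Defined.

Record endofunctor := Endofunctor {
  F0 :> cset -> cset;
  F1 : forall X Y : cset, nt X Y -> nt (F0 X) (F0 Y);
  F1_id : forall X : cset, nt_eq (F1 (ntid X)) (ntid (F0 X));
  F1_comp : forall (X Y Z : cset) (g : nt Y Z) (f : nt X Y),
      nt_eq (F1 (ntcomp g f)) (ntcomp (F1 g) (F1 f)) }.

Record monad := Monad {
  mfun :> endofunctor;
  munit : forall X : cset, nt X (mfun X);
  mmult : forall X : cset, nt (mfun (mfun X)) (mfun X);
  munit_nat : forall (X Y : cset) (h : nt X Y),
      nt_eq (ntcomp (F1 mfun h) (munit X)) (ntcomp (munit Y) h);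
  mmult_nat : forall (X Y : cset) (h : nt X Y),
      nt_eq (ntcomp (F1 mfun h) (mmult X))
            (ntcomp (mmult Y) (F1 mfun (F1 mfun h)));
  mmult_unitl : forall X : cset,
      nt_eq (ntcomp (mmult X) (munit (mfun X))) (ntid (mfun X));
  mmult_unitr : forall X : cset,
      nt_eq (ntcomp (mmult X) (F1 mfun (munit X))) (ntid (mfun X));
  mmult_assoc : forall X : cset,
      nt_eq (ntcomp (mmult X) (F1 mfun (mmult X)))
            (ntcomp (mmult X) (mmult (mfun X))) }.

Definition Talg (X : cset) (phi : nt (Tob X) X) : Prop :=
  nt_eq (ntcomp phi (tunit X)) (ntid X).

Definition Talg_hom (X Y : cset) (phi : nt (Tob X) X) (psi : nt (Tob Y) Y)
  (h : nt X Y) : Prop :=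
  nt_eq (ntcomp h phi) (ntcomp psi (Tmap h)).

Definition EMalg (M : monad) (X : cset) (psi : nt (M X) X) : Prop :=
  nt_eq (ntcomp psi (munit M X)) (ntid X) /\
  nt_eq (ntcomp psi (F1 M psi)) (ntcomp psi (mmult M X)).

Definition EMalg_hom (M : monad) (X Y : cset) (psi : nt (M X) X)
  (psi' : nt (M Y) Y) (h : nt X Y) : Prop :=
  nt_eq (ntcomp h psi) (ntcomp psi' (F1 M h)).

(* The comparison functor EM(M) -> (T,t)-Alg, (X, psi) |-> (X, psi o eta_X),
   h |-> h, is an isomorphism of categories.  Since it commutes with the
   forgetful functors to cSet, this amounts to:
   - bijectivity on objects: for each X, psi |-> psi o eta_X is a bijection
     from M-algebra structures on X onto (T,t)-algebra structures on X;
   - bijectivity on hom-sets: injectivity (faithfulness) is automatic since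
     h |-> h; fullness says every (T,t)-algebra morphism between the images
     is an M-algebra morphism. *)
Definition comparison_is_iso (M : monad) (eta : forall X : cset, nt (Tob X) (M X))
  : Prop :=
  (forall (X : cset) (phi : nt (Tob X) X), Talg phi ->
     exists psi : nt (M X) X, EMalg psi /\ nt_eq (ntcomp psi (eta X)) phi) /\
  (forall (X : cset) (psi psi' : nt (M X) X), EMalg psi -> EMalg psi' ->
     nt_eq (ntcomp psi (eta X)) (ntcomp psi' (eta X)) -> nt_eq psi psi') /\
  (forall (X Y : cset) (psi : nt (M X) X) (psi' : nt (M Y) Y) (h : nt X Y),
     EMalg psi -> EMalg psi' ->
     Talg_hom (ntcomp psi (eta X)) (ntcomp psi' (eta Y)) h ->
     EMalg_hom psi psi' h).

(* The free (T,t)-algebra on X is built syntactically: a term is either a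
   point of X or a formal filler of an open box whose sides are again terms,
   and two terms are identified when they have the same value in every
   (T,t)-algebra under every valuation of X (a Prop-valued, hence small,
   quantification).  Having free algebras on every X, the forgetful functor
   from (T,t)-algebras is a right adjoint; T_oo is the induced monad and
   eta_X = (free structure map) o T(unit).  A (T,t)-structure phi on X
   yields the T_oo-structure extending id_X along the free algebra, and a
   T_oo-structure psi is the unique algebra map from the free algebra to
   (X, psi o eta_X) extending id_X; uniqueness of such extensions also shows
   that (T,t)-algebra maps between the images are T_oo-algebra maps. *)

From Stdlib Require Import Relations.Relation_Operators.
From Stdlib Require Import FunctionalExtensionality ProofIrrelevance.
From Stdlib Require Import PropExtensionality ClassicalEpsilon.
From mathcomp Require Import all_boot.

Set Implicit Arguments.
Unset Strict Implicit.
Unset Printing Implicit Defensive.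

Lemma qcls_eq (A : Type) (R : A -> A -> Prop) a b : R a b -> qcls R a = qcls R b.
Proof.
move=> Rab; apply: quot_eq => /=.
apply: functional_extensionality => x; apply: propositional_extensionality.
split=> Hx; apply: rst_trans Hx; [apply: rst_sym|]; exact: rst_step.
Qed.

Lemma qcls_rst (A : Type) (R : A -> A -> Prop) a b :
  qcls R a = qcls R b -> clos_refl_sym_trans A R a b.
Proof.
move=> E; have : sval (qcls R b) b by apply: rst_refl.
by rewrite -E.
Qed.

Lemma rst_ind_eq (A B : Type) (R : A -> A -> Prop) (f : A -> B) :
  (forall a b, R a b -> f a = f b) ->
  forall a b, clos_refl_sym_trans A R a b -> f a = f b.
Proof. by move=> Rf a b; elim=> [x y /Rf| | x y _ -> | x y z _ -> _ ->]. Qed.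

Definition qrep (A : Type) (R : A -> A -> Prop) (q : quot R) : A :=
  proj1_sig (constructive_indefinite_description _ (qsurj q)).

Lemma qrepK (A : Type) (R : A -> A -> Prop) (q : quot R) : qcls R (qrep q) = q.
Proof. by rewrite /qrep; case: constructive_indefinite_description => a /= ->. Qed.

Definition qlift (A B : Type) (R : A -> A -> Prop) (f : A -> B) (q : quot R) : B :=
  f (qrep q).

Lemma qlift_cls (A B : Type) (R : A -> A -> Prop) (f : A -> B) :
  (forall a b, R a b -> f a = f b) -> forall a, qlift f (qcls R a) = f a.
Proof. by move=> Rf a; apply: (rst_ind_eq Rf); apply: qcls_rst; rewrite qrepK. Qed.

Lemma ntcompE (X Y Z : cset) (g : nt Y Z) (f : nt X Y) m x :
  ntcomp g f m x = g m (f m x).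
Proof. by []. Qed.

Definition natural (A B : cset) (F : forall m, A m -> B m) : Prop :=
  forall n m (f : bhom n m) x, F m (cmap A f x) = cmap B f (F n x).

Lemma Tmap_id (X : cset) m (q : Tob X m) : Tmap (ntid X) m q = q.
Proof.
case: (qsurj q) => [[x|[k [e [phi g]]]] ->]; rewrite /= qmap_cls //=.
by have -> : ntcomp (ntid X) phi = phi by apply: nt_ext.
Qed.

Lemma Tmap_comp (X Y Z : cset) (g : nt Y Z) (f : nt X Y) m (q : Tob X m) :
  Tmap (ntcomp g f) m q = Tmap g m (Tmap f m q).
Proof.
case: (qsurj q) => [[x|[k [e [phi h]]]] ->]; rewrite /= !qmap_cls //=.
by have -> : ntcomp (ntcomp g f) phi = ntcomp g (ntcomp f phi) by apply: nt_ext.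
Qed.

Lemma Tmap_tunit (X Y : cset) (h : nt X Y) m x :
  Tmap h m (tunit X m x) = tunit Y m (h m x).
Proof. by rewrite /= qmap_cls. Qed.

Definition Tfill (A : cset) m k e (phi : cexp (box k e) A m) (g : bhom k.+1 m) : Tob A m :=
  qcls (@Trel A m) (inr (existT _ k (existT _ e (phi, g)))).

Record alg := Alg { acar : cset; aop : nt (Tob acar) acar; alaw : Talg aop }.

Lemma aop_Tfill_box (A : alg) m k e (psi : cexp (box k e) (acar A) m) (b : box k e m) :
  aop A m (Tfill psi (val b)) = ceval psi b.
Proof. by rewrite /Tfill -(qcls_eq (Tglue psi b)); exact (@alaw A m (ceval psi b)). Qed.

Lemma Talg_homE (X Y : cset) (a : nt (Tob X) X) (b : nt (Tob Y) Y) (h : nt X Y) :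
  Talg_hom a b h -> forall m q, h m (a m q) = b m (Tmap h m q).
Proof. by []. Qed.

Lemma Talg_hom_id (X : cset) (a : nt (Tob X) X) : Talg_hom a a (ntid X).
Proof. by move=> m q; rewrite !ntcompE Tmap_id. Qed.

Lemma Talg_hom_comp (X Y Z : cset) (a : nt (Tob X) X) (b : nt (Tob Y) Y)
  (c : nt (Tob Z) Z) (h : nt X Y) (k : nt Y Z) :
  Talg_hom a b h -> Talg_hom b c k -> Talg_hom a c (ntcomp k h).
Proof.
move=> /Talg_homE hom_h /Talg_homE hom_k m q.
by rewrite !ntcompE Tmap_comp hom_h hom_k.
Qed.

Record free_alg (X : cset) := FreeAlg {
  falg : alg;
  funit : nt X (acar falg);
  fext : forall A : alg, nt X (acar A) -> nt (acar falg) (acar A);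
  fext_unit : forall (A : alg) (v : nt X (acar A)) m x, @fext A v m (funit m x) = v m x;
  fext_hom : forall (A : alg) (v : nt X (acar A)), Talg_hom (aop falg) (aop A) (@fext A v);
  falg_hom_eq : forall (A : alg) (h1 h2 : nt (acar falg) (acar A)),
    Talg_hom (aop falg) (aop A) h1 -> Talg_hom (aop falg) (aop A) h2 ->
    (forall m x, h1 m (funit m x) = h2 m (funit m x)) -> nt_eq h1 h2 }.

Arguments fext {X} f A v.

Section AlgebraicallyFreeMonad.

Variable free : forall X : cset, free_alg X.

Local Notation M X := (acar (falg (free X))).
Local Notation unitM X := (funit (free X)).
Local Notation algM X := (aop (falg (free X))).

Definition mapM (X Y : cset) (h : nt X Y) : nt (M X) (M Y) :=
  fext (free X) (falg (free Y)) (ntcomp (unitM Y) h).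

Definition multM (X : cset) : nt (M (M X)) (M X) :=
  fext (free (M X)) (falg (free X)) (ntid (M X)).

Lemma mapM_unit (X Y : cset) (h : nt X Y) m x :
  mapM h m (unitM X m x) = unitM Y m (h m x).
Proof. exact: fext_unit. Qed.

Lemma multM_unit (X : cset) m x : multM X m (unitM (M X) m x) = x.
Proof. exact: fext_unit. Qed.

Lemma mapM_hom (X Y : cset) (h : nt X Y) : Talg_hom (algM X) (algM Y) (mapM h).
Proof. exact: fext_hom. Qed.

Lemma multM_hom (X : cset) : Talg_hom (algM (M X)) (algM X) (multM X).
Proof. exact: fext_hom. Qed.

Definition Mfun : endofunctor.
Proof.
refine (@Endofunctor (fun X => M X) mapM _ _).
- move=> X; apply: falg_hom_eq; [exact: mapM_hom | exact: Talg_hom_id |].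
  by move=> m x; rewrite mapM_unit.
- move=> X Y Z g f; apply: falg_hom_eq; first exact: mapM_hom.
    exact: Talg_hom_comp (mapM_hom f) (mapM_hom g).
  by move=> m x; rewrite !ntcompE !mapM_unit.
Defined.

Definition Mmonad : monad.
Proof.
refine (@Monad Mfun (fun X => unitM X) multM _ _ _ _ _).
- by move=> X Y h m x; rewrite ntcompE mapM_unit.
- move=> X Y h; apply: falg_hom_eq.
  + exact: Talg_hom_comp (@multM_hom X) (mapM_hom h).
  + exact: Talg_hom_comp (mapM_hom (mapM h)) (@multM_hom Y).
  + by move=> m x; rewrite !ntcompE multM_unit mapM_unit multM_unit.
- by move=> X m x; rewrite ntcompE multM_unit.
- move=> X; apply: falg_hom_eq.
  + exact: Talg_hom_comp (mapM_hom (unitM X)) (@multM_hom X).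
  + exact: Talg_hom_id.
  + by move=> m x; rewrite !ntcompE mapM_unit multM_unit.
- move=> X; apply: falg_hom_eq.
  + exact: Talg_hom_comp (mapM_hom (multM X)) (@multM_hom X).
  + exact: Talg_hom_comp (@multM_hom (M X)) (@multM_hom X).
  + by move=> m x; rewrite !ntcompE mapM_unit !multM_unit.
Defined.

Definition etaM (X : cset) : nt (Tob X) (M X) := ntcomp (algM X) (Tmap (unitM X)).

Lemma Tmap_fixing_unit (X Y : cset) (h : nt (M X) Y) (v : nt X Y) m q :
  (forall n x, h n (unitM X n x) = v n x) ->
  Tmap h m (Tmap (unitM X) m q) = Tmap v m q.
Proof.
by move=> hv; rewrite -Tmap_comp; congr (Tmap _ m q); apply: nt_ext => n x; apply: hv.
Qed.

Lemma etaM_natural (X Y : cset) (h : nt X Y) m q :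
  etaM Y m (Tmap h m q) = mapM h m (etaM X m q).
Proof.
rewrite !ntcompE (Talg_homE (mapM_hom h)) (@Tmap_fixing_unit _ _ _ (ntcomp (unitM Y) h)).
  by rewrite Tmap_comp.
exact: mapM_unit.
Qed.

Lemma etaM_tunit (X : cset) m x : etaM X m (tunit X m x) = unitM X m x.
Proof. by rewrite ntcompE Tmap_tunit; exact (@alaw (falg (free X)) m (unitM X m x)). Qed.

Lemma multM_etaM (X : cset) m q : multM X m (etaM (M X) m q) = algM X m q.
Proof.
rewrite ntcompE (Talg_homE (@multM_hom X)) (@Tmap_fixing_unit _ _ _ (ntid (M X))).
  by rewrite Tmap_id.
exact: multM_unit.
Qed.

Section EilenbergMoore.

Variables (X : cset) (psi : nt (M X) X).
Hypothesis psi_EM : EMalg (M := Mmonad) psi.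

Lemma EMalg_unit m x : psi m (unitM X m x) = x.
Proof. exact: psi_EM.1. Qed.

Lemma EMalg_mult m q : psi m (mapM psi m q) = psi m (multM X m q).
Proof. exact: psi_EM.2. Qed.

Lemma EMalg_Talg : Talg (ntcomp psi (etaM X)).
Proof. by move=> m x; rewrite 2!ntcompE etaM_tunit EMalg_unit. Qed.

Lemma EMalg_Talg_hom : Talg_hom (algM X) (ntcomp psi (etaM X)) psi.
Proof.
by move=> m q; rewrite !ntcompE -multM_etaM -EMalg_mult -etaM_natural.
Qed.

End EilenbergMoore.

Lemma Talg_EMalg_lift (X : cset) (phi : nt (Tob X) X) (phi_alg : Talg phi) :
  exists psi : nt (M X) X,
    EMalg (M := Mmonad) psi /\ nt_eq (ntcomp psi (etaM X)) phi.
Proof.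
pose A := Alg phi_alg; pose psi := fext (free X) A (ntid X).
have psi_unit m x : psi m (unitM X m x) = x by exact: fext_unit.
have psi_hom : Talg_hom (algM X) phi psi := @fext_hom X (free X) A (ntid X).
exists psi; split; first split.
- by move=> m x; rewrite ntcompE psi_unit.
- apply: (falg_hom_eq (A := A)).
  + exact: Talg_hom_comp (mapM_hom psi) psi_hom.
  + exact: Talg_hom_comp (@multM_hom X) psi_hom.
  + by move=> m x; rewrite !ntcompE /= mapM_unit multM_unit psi_unit.
- move=> m q; rewrite ntcompE (Talg_homE psi_hom).
  by rewrite (Tmap_fixing_unit (v := ntid X) _ psi_unit) Tmap_id.
Qed.

Lemma EMalg_unique (X : cset) (psi psi' : nt (M X) X) :
  EMalg (M := Mmonad) psi -> EMalg (M := Mmonad) psi' ->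
  nt_eq (ntcomp psi (etaM X)) (ntcomp psi' (etaM X)) -> nt_eq psi psi'.
Proof.
move=> psi_EM psi'_EM E.
apply: (falg_hom_eq (A := Alg (EMalg_Talg psi_EM))); first exact: EMalg_Talg_hom.
  by move=> m q; rewrite ntcompE (Talg_homE (EMalg_Talg_hom psi'_EM)) -E.
by move=> m x; rewrite !EMalg_unit.
Qed.

Lemma EMalg_hom_of_Talg_hom (X Y : cset) (psi : nt (M X) X) (psi' : nt (M Y) Y)
  (h : nt X Y) :
  EMalg (M := Mmonad) psi -> EMalg (M := Mmonad) psi' ->
  Talg_hom (ntcomp psi (etaM X)) (ntcomp psi' (etaM Y)) h ->
  EMalg_hom (M := Mmonad) psi psi' h.
Proof.
move=> psi_EM psi'_EM h_hom.
apply: (falg_hom_eq (A := Alg (EMalg_Talg psi'_EM))).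
- exact: Talg_hom_comp (EMalg_Talg_hom psi_EM) h_hom.
- exact: Talg_hom_comp (mapM_hom h) (EMalg_Talg_hom psi'_EM).
- by move=> m x; rewrite !ntcompE /= mapM_unit !EMalg_unit.
Qed.

End AlgebraicallyFreeMonad.

Lemma in_box_point k e m :
  in_box e (alpha (ord0 : 'I_k.+1) (~~ e) ([ffun _ => ord0] : bhom k m)).
Proof.
apply/existsP; exists ord0; apply/existsP; exists (~~ e); apply/andP; split.
  by case: e.
by apply/existsP; eexists; exact: eqxx.
Qed.

Definition box_point k e m : box k e m := exist (fun g => in_box e g) _ (in_box_point k e m).

Section FreeTalg.

Variable X : cset.

Inductive term : nat -> Type :=
| tvar m : X m -> term m
| tfill m k e : (forall m', cprod (box k e) (yo m) m' -> term m') -> bhom k.+1 m -> term m.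

(* The sides of a formal filler need not form a natural family; when their
   values do not, [interp] returns a junk value.  Only well-formed terms,
   whose sides have natural values in every algebra, are used below. *)
Fixpoint interp (A : alg) (v : nt X (acar A)) m (t : term m) {struct t} : acar A m :=
  match t with
  | tvar m x => v m x
  | @tfill m k e args g =>
    let F := fun m' p => interp v (args m' p) in
    match excluded_middle_informative (natural F) with
    | left F_nat => aop A m (Tfill (NT F F_nat) g)
    | right _ => F m (box_point k e m, bid m)
    end
  end.

Inductive wf_term : forall m, term m -> Prop :=
| wf_tvar m (x : X m) : wf_term (tvar x)
| wf_tfill m k e (args : forall m', cprod (box k e) (yo m) m' -> term m') g :
    (forall m' p, wf_term (args m' p)) ->
    (forall (A : alg) (v : nt X (acar A)), natural (fun m' p => interp v (args m' p))) ->
    wf_term (tfill args g).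

Lemma interp_tfill (A : alg) (v : nt X (acar A)) m k e
  (args : forall m', cprod (box k e) (yo m) m' -> term m') g
  (args_nat : natural (fun m' p => interp v (args m' p))) :
  interp v (tfill args g) = aop A m (Tfill (NT _ args_nat) g).
Proof.
rewrite /=; case: excluded_middle_informative => [args_nat'|//].
by rewrite (proof_irrelevance _ args_nat' args_nat).
Qed.

Definition term_map m m' (f : bhom m m') (t : term m) : term m' :=
  match t in term m0 return bhom m0 m' -> term m' with
  | tvar m x => fun f => tvar (cmap X f x)
  | @tfill m k e args g => fun f =>
      tfill (fun m'' (p : cprod (box k e) (yo m') m'') => args m'' (p.1, bcomp p.2 f))
            (bcomp f g)
  end f.

Lemma natural_restr (A : cset) m m' k e (f : bhom m m')
  (F : forall m'', cprod (box k e) (yo m) m'' -> A m'') :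
  natural F ->
  natural (fun m'' (p : cprod (box k e) (yo m') m'') => F m'' (p.1, bcomp p.2 f)).
Proof. by move=> F_nat n n' h [b g]; rewrite -F_nat /= bcomp_assoc. Qed.

Lemma wf_term_map m m' (f : bhom m m') (t : term m) : wf_term t -> wf_term (term_map f t).
Proof.
move=> t_wf; case: t_wf f => [m0 x|m0 k e args g args_wf args_nat] f /=; first exact: wf_tvar.
constructor=> [m'' p|A v]; first by apply: args_wf. exact (natural_restr f (args_nat A v)).
Qed.

Lemma interp_term_map (A : alg) (v : nt X (acar A)) m m' (f : bhom m m') (t : term m) :
  wf_term t -> interp v (term_map f t) = cmap (acar A) f (interp v t).
Proof.
move=> t_wf; case: t_wf f => [m0 x|m0 k e args g _ args_nat] f; first by rewrite /= ntnat.
rewrite (interp_tfill (args := fun m'' p => args m'' (p.1, bcomp p.2 f)) _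
  (natural_restr f (args_nat A v))) (interp_tfill _ (args_nat A v)).
rewrite -ntnat /Tfill /= qmap_cls /=; congr (aop A _ (qcls _ (inr _))).
by do 2 congr existT; congr pair; apply: nt_ext.
Qed.

Definition wterm m := {t : term m | wf_term t}.

Definition same_value m (s t : wterm m) : Prop :=
  forall (A : alg) (v : nt X (acar A)), interp v (sval s) = interp v (sval t).

Lemma qcls_same_value m (s t : wterm m) :
  qcls (@same_value m) s = qcls (@same_value m) t -> same_value s t.
Proof.
move=> E A v; apply: (rst_ind_eq (f := fun s : wterm m => interp v (sval s)) _ (qcls_rst E)).
by move=> a b; apply.
Qed.

Definition wterm_map m m' (f : bhom m m') (s : wterm m) : wterm m' :=
  exist _ (term_map f (sval s)) (wf_term_map f (svalP s)).

Lemma wterm_map_resp m m' (f : bhom m m') (s t : wterm m) :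
  same_value s t -> clos_refl_sym_trans _ (@same_value m') (wterm_map f s) (wterm_map f t).
Proof.
move=> st; apply: rst_step => A v /=.
by rewrite (interp_term_map _ _ (svalP s)) (interp_term_map _ _ (svalP t)) st.
Qed.

Definition Fcar : cset.
Proof.
refine (@CSet (fun m => quot (@same_value m))
  (fun m m' f q => qmap (@wterm_map_resp m m' f) q) _ _).
- move=> m q; case: (qsurj q) => s ->; rewrite qmap_cls; apply: qcls_eq => A v /=.
  by rewrite (interp_term_map _ _ (svalP s)) cmap_id.
- move=> m m' l g f q; case: (qsurj q) => s ->; rewrite !qmap_cls; apply: qcls_eq => A v /=.
  rewrite (interp_term_map _ _ (svalP s)) (interp_term_map _ _ (wf_term_map _ (svalP s))).
  by rewrite (interp_term_map _ _ (svalP s)) cmap_comp.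
Defined.

Lemma Fcar_map m m' (f : bhom m m') (s : wterm m) :
  cmap Fcar f (qcls (@same_value m) s) = qcls (@same_value m') (wterm_map f s).
Proof. by rewrite /= qmap_cls. Qed.

Definition ext_fun (A : alg) (v : nt X (acar A)) m (q : Fcar m) : acar A m :=
  interp v (sval (qrep q)).

Lemma ext_fun_cls (A : alg) (v : nt X (acar A)) m (s : wterm m) :
  ext_fun v (qcls (@same_value m) s) = interp v (sval s).
Proof. by apply: qcls_same_value; rewrite qrepK. Qed.

Lemma ext_fun_natural (A : alg) (v : nt X (acar A)) : natural (ext_fun v).
Proof.
move=> n m f q; case: (qsurj q) => s ->.
by rewrite Fcar_map !ext_fun_cls /= (interp_term_map _ _ (svalP s)).
Qed.

Definition ext (A : alg) (v : nt X (acar A)) : nt Fcar (acar A) :=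
  NT _ (ext_fun_natural v).

Definition wtvar m (x : X m) : wterm m := exist _ (tvar x) (wf_tvar x).

Lemma Funit_natural n m (f : bhom n m) (x : X n) :
  qcls (@same_value m) (wtvar (cmap X f x)) = cmap Fcar f (qcls (@same_value n) (wtvar x)).
Proof. by rewrite Fcar_map; apply: qcls_eq. Qed.

Definition Funit : nt X Fcar := @NT X Fcar (fun m x => qcls (@same_value m) (wtvar x)) Funit_natural.

Lemma ext_unit (A : alg) (v : nt X (acar A)) m x : ext v m (Funit m x) = v m x.
Proof. exact: ext_fun_cls. Qed.

Definition sides_rep m k e (phi : cexp (box k e) Fcar m) :
  forall m', cprod (box k e) (yo m) m' -> term m' :=
  fun m' p => sval (qrep (phi m' p)).
Arguments sides_rep {m k e} phi m' p.

Lemma sides_rep_natural m k e (phi : cexp (box k e) Fcar m) (A : alg) (v : nt X (acar A)) :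
  natural (fun m' p => interp v (sides_rep phi m' p)).
Proof.
move=> n n' f p; rewrite /sides_rep (@ntnat _ _ phi).
exact: (ext_fun_natural v f (phi n p)).
Qed.

Definition fill_wterm m k e (phi : cexp (box k e) Fcar m) g : wterm m :=
  exist _ (tfill (sides_rep phi) g)
    (wf_tfill g (fun m' p => svalP (qrep (phi m' p))) (sides_rep_natural phi)).

Lemma interp_fill_wterm (A : alg) (v : nt X (acar A)) m k e (phi : cexp (box k e) Fcar m) g :
  interp v (sval (fill_wterm phi g)) = aop A m (Tfill (ntcomp (ext v) phi) g).
Proof.
rewrite (interp_tfill _ (sides_rep_natural phi v)).
by congr (aop A m (Tfill _ g)); apply: nt_ext.
Qed.

Definition Fop_pre m (p : Tpre Fcar m) : Fcar m :=
  match p with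
  | inl q => q
  | inr (existT k (existT e (phi, g))) => qcls (@same_value m) (fill_wterm phi g)
  end.

Lemma Fop_pre_resp m (p p' : Tpre Fcar m) : Trel p p' -> Fop_pre p = Fop_pre p'.
Proof.
case=> k e phi b /=; rewrite -[ceval phi b]qrepK; apply: qcls_eq => A v.
by rewrite interp_fill_wterm aop_Tfill_box.
Qed.

Lemma Fop_natural : natural (fun m (q : Tob Fcar m) => qlift (@Fop_pre m) q).
Proof.
move=> n m f q; case: (qsurj q) => [[q'|[k [e [phi g]]]] ->];
  rewrite /= qmap_cls !(qlift_cls (@Fop_pre_resp _)) //= qmap_cls.
(* Both sides are the same filler term, up to conversion. *)
by apply: qcls_eq.
Qed.

Definition Fop : nt (Tob Fcar) Fcar := NT _ Fop_natural.

Lemma Fop_law : Talg Fop.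
Proof. by move=> m q; rewrite /= (qlift_cls (@Fop_pre_resp _)). Qed.

Definition Falg : alg := Alg Fop_law.

Lemma ext_hom (A : alg) (v : nt X (acar A)) : Talg_hom Fop (aop A) (ext v).
Proof.
move=> m q; case: (qsurj q) => [[q'|[k [e [phi g]]]] ->].
  by rewrite /= (qlift_cls (@Fop_pre_resp _)) qmap_cls; symmetry; exact (@alaw A m _).
by rewrite /= (qlift_cls (@Fop_pre_resp _)) qmap_cls /= ext_fun_cls interp_fill_wterm.
Qed.

Definition term_cls m (t : term m) (t_wf : wf_term t) : Fcar m :=
  qcls (@same_value m) (exist _ t t_wf).

Lemma term_cls_sides_natural m k e (args : forall m', cprod (box k e) (yo m) m' -> term m')
  (args_wf : forall m' p, wf_term (args m' p))
  (args_nat : forall (A : alg) (v : nt X (acar A)), natural (fun m' p => interp v (args m' p))) :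
  natural (fun m' p => term_cls (args_wf m' p)).
Proof.
move=> n n' f p; rewrite Fcar_map; apply: qcls_eq => A v /=.
by rewrite (interp_term_map _ _ (args_wf n p)); exact: args_nat.
Qed.

Lemma term_cls_tfill m k e (args : forall m', cprod (box k e) (yo m) m' -> term m') g
  args_wf args_nat (t_wf : wf_term (tfill args g)) :
  term_cls t_wf = Fop m (Tfill (NT _ (@term_cls_sides_natural m k e args args_wf args_nat)) g).
Proof.
rewrite /= (qlift_cls (@Fop_pre_resp _)) /=; apply: qcls_eq => A v.
rewrite interp_fill_wterm (interp_tfill _ (args_nat A v)).
by congr (aop A m (Tfill _ g)); apply: nt_ext => m' p /=; rewrite ext_fun_cls.
Qed.

Lemma Talg_hom_interp (A : alg) (h : nt Fcar (acar A)) :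
  Talg_hom Fop (aop A) h ->
  forall m (t : term m) (t_wf : wf_term t), h m (term_cls t_wf) = interp (ntcomp h Funit) t.
Proof.
move=> h_hom m t t_wf; move: (t_wf).
elim: t_wf => [m0 x|m0 k e args g args_wf IH args_nat] t_wf.
  by rewrite (proof_irrelevance _ t_wf (wf_tvar x)).
rewrite (term_cls_tfill args_wf args_nat) (Talg_homE h_hom).
rewrite (interp_tfill _ (args_nat A (ntcomp h Funit))) /Tfill /= qmap_cls /=.
by congr (aop A m0 (Tfill _ g)); apply: nt_ext => m' p /=; apply: IH.
Qed.

Lemma Falg_hom_eq (A : alg) (h1 h2 : nt Fcar (acar A)) :
  Talg_hom Fop (aop A) h1 -> Talg_hom Fop (aop A) h2 ->
  (forall m x, h1 m (Funit m x) = h2 m (Funit m x)) -> nt_eq h1 h2.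
Proof.
move=> hom1 hom2 E m q; case: (qsurj q) => [[t t_wf] ->].
change (h1 m (term_cls t_wf) = h2 m (term_cls t_wf)).
rewrite (Talg_hom_interp hom1) (Talg_hom_interp hom2).
by have -> : ntcomp h1 Funit = ntcomp h2 Funit by apply: nt_ext.
Qed.

End FreeTalg.

Definition free_Talg (X : cset) : free_alg X :=
  @FreeAlg X (Falg X) (Funit X) (@ext X) (@ext_unit X) (@ext_hom X) (@Falg_hom_eq X).

Theorem proposition3p3 :
  exists (M : monad) (eta : forall X : cset, nt (Tob X) (M X)),
    (* eta : T -> T_oo is natural *)
    (forall (X Y : cset) (h : nt X Y),
        nt_eq (ntcomp (eta Y) (Tmap h)) (ntcomp (F1 M h) (eta X))) /\
    (* eta o t = t_oo *)
    (forall X : cset, nt_eq (ntcomp (eta X) (tunit X)) (munit M X)) /\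
    (* the comparison functor is an isomorphism of categories *)
    comparison_is_iso eta.
Proof.
exists (Mmonad free_Talg), (etaM free_Talg).
split; first exact: etaM_natural.
split; first exact: etaM_tunit.
split; first exact: Talg_EMalg_lift.
split; first exact: EMalg_unique.
exact: EMalg_hom_of_Talg_hom.
Qed.
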